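(* Let $X,Y$ be Banach spaces, $Z=X\times Y$, and let $P_X:(x,y)\mapsto x$, $P_Y:(x,y)\mapsto y$. Let $C=\begin{pmatrix}A&0\\0&B\end{pmatrix}$ be the generator of a $C_0$ bi-semigroup on $Z$, i.e. $A$ generates a $C_0$ semigroup $T(t)$ ($t\ge 0$) on $X$ and $-B$ generates a $C_0$ semigroup $t\mapsto S(-t)$ ($t\ge0$) on $Y$. Let $M$ be a Hausdorff topological space with a continuous semiflow $(t,\omega)\mapsto t\omega$. Let $L:M\to L(Z,Z)$ satisfy (D1): $(\omega,z)\mapsto L(\omega)z$ is continuous, $\tau(\omega):=\sup_{t\ge0}|L(t\omega)|<\infty$ for every $\omega$, and $\omega\mapsto\tau(\omega)$ is locally bounded. Let $f:M\times Z\to Z$ satisfy (D2): $f$ is continuous, $\varepsilon(\omega):=\sup_{t\ge0}\mathrm{Lip}\,f(t\omega)(\cdot)<\infty$ for every $\omega$, and $\omega\mapsto\varepsilon(\omega)$ is locally bounded. Assume $(\mathrm{UD}_+)$: there are a decomposition $Z=X_\omega\oplus Y_\omega$ with projections $P_\omega$, $P^c_\omega=I-P_\omega$ and operators $T_1$, $S_1$ satisfying the uniform dichotomy on $\mathbb{R}_+$ (see context) with constant $C_1$ and functions $\mu_s,\mu_u:M\to\mathbb{R}$, and such that for all $\omega\in M$, $t_1\le t_2$, $x_1\in X_{t_1\omega}$, $y_2\in Y_{t_2\omega}$, the function $z(t)=T_1(t-t_1,t_1\omega)x_1+S_1(t-t_2,t_2\omega)y_2$, $t\in[t_1,t_2]$,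 satisfies $P_Xz(t)=T(t-t_1)P_Xz(t_1)+\int_{t_1}^tT(t-s)P_XL(s\omega)z(s)\,ds$ and $P_Yz(t)=S(t-t_2)P_Yz(t_2)-\int_t^{t_2}S(t-s)P_YL(s\omega)z(s)\,ds$ for $t\in[t_1,t_2]$. Let $\{H(t,\omega)\}$ be the cocycle correspondence induced by the integral equation $x(t)=T_1(t-t_1,t_1\omega)x(t_1)+\int_{t_1}^tT_1(t-s,s\omega)P_{s\omega}f(s\omega)z(s)\,ds$, $y(t)=S_1(t-t_2,t_2\omega)y(t_2)-\int_t^{t_2}S_1(t-s,s\omega)P^c_{s\omega}f(s\omega)z(s)\,ds$ (see context). Put $\varepsilon'(\omega)=2C_1\varepsilon(\omega)$ and assume $\mu_u(\omega)-\mu_s(\omega)-2\varepsilon'(\omega)>0$. Take $\alpha,\beta,\lambda_u,\lambda_s$ with $\frac{\varepsilon'(\omega)}{\mu_u(\omega)-\mu_s(\omega)-\varepsilon'(\omega)}\le\alpha(\omega),\beta(\omega)<1$, $\lambda_u(\omega)=e^{-\mu_u(\omega)+\varepsilon'(\omega)}$, $\lambda_s(\omega)=e^{\mu_s(\omega)+\varepsilon'(\omega)}$. Then $H(t,s\omega)$ satisfies the (A)$(\alpha(\omega),\lambda_u^t(\omega))$ (B)$(\beta(\omega),\lambda_s^t(\omega))$ condition for all $t,s\ge0$ and $\omega\in M$. Moreover, if $\alpha(\omega),\beta(\omega)\in(\frac{\varepsilon'(\omega)}{\mu_u(\omega)-\mu_s(\omega)-\varepsilon'(\omega)},1)$ and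 $t\ge\epsilon_1>0$, then $H(t,s\omega)$ satisfies (A)$(\alpha(\omega);k_\alpha(\omega)\alpha(\omega),\lambda_u^t(\omega))$ (B)$(\beta(\omega);k_\beta(\omega)\beta(\omega),\lambda_s^t(\omega))$ for any $k_h(\omega)$ with $\frac{(\sigma(\omega)-\frac{\varepsilon'(\omega)}{h(\omega)})e^{-\sigma(\omega)\epsilon_1}+\frac{\varepsilon'(\omega)}{h(\omega)}}{\sigma(\omega)}\le k_h(\omega)<1$, $h=\alpha,\beta$, where $\sigma(\omega)=\mu_u(\omega)-\mu_s(\omega)-\varepsilon'(\omega)$. In particular, if there is a constant $c>1$ with $\inf_\omega\{\mu_u(\omega)-\mu_s(\omega)-(1+c)\varepsilon'(\omega)\}>0$, then $\alpha,\beta,k_\alpha,k_\beta$ can be taken to be constants less than $1$ and $\sup_\omega\lambda_s(\omega)\lambda_u(\omega)<1$; in fact $\sup_\omega\alpha(\omega),\sup_\omega\beta(\omega)$ can be chosen to tend to $0$ as $\sup_\omega\varepsilon'(\omega)\to0$.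
   Context: Uniform dichotomy on $\mathbb{R}_+$: (a) $Z=X_\omega\oplus Y_\omega$ for each $\omega\in M$, with projections $P_\omega$ onto $X_\omega$ along $Y_\omega$, $P^c_\omega=I-P_\omega$, and $(\omega,z)\mapsto P_\omega z$ continuous; (b) $T_1$ is a strongly continuous linear cocycle: $T_1(t,\omega)\in L(X_\omega,X_{t\omega})$, $T_1(0,\omega)=\mathrm{id}$, $T_1(t+s,\omega)=T_1(t,s\omega)T_1(s,\omega)$, $(t,\omega,z)\mapsto T_1(t,\omega)P_\omega z$ continuous; for $s\le t$, $T_1(t-s,s\omega):X_{s\omega}\to X_{t\omega}$. $S_1$ assigns to $t\ge0,\omega\in M$ an operator $S_1(-t,t\omega)\in L(Y_{t\omega},Y_\omega)$ (the second argument is notation indexed by $(t,\omega)$, since the semiflow need not be invertible; for $t\le s$, $S_1(t-s,s\omega)$ denotes $S_1(-(s-t),(s-t)(t\omega)):Y_{s\omega}\to Y_{t\omega}$), with $S_1(0,\omega)=\mathrm{id}$, $S_1(-(t+s),(t+s)\omega)=S_1(-s,s\omega)S_1(-t,t(s\omega))$, and $(t,\omega,z)\mapsto S_1(-t,t\omega)P^c_{t\omega}z$ continuous; (c) $\sup_\omega|P_\omega|\le C_1$, $\sup_\omega|P^c_\omega|\le C_1$; (d) $|T_1(t,r\omega)|\le e^{\mu_s(\omega)t}$ and $|S_1(-t,t(r\omega))|\le e^{-\mu_u(\omega)t}$ for all $t,r\ge0$, $\omega\in M$. Induced cocycle correspondence: for $s\ge0$, $\omega\in M$, $x_1\in X_\omega$,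 $y_2\in Y_{s\omega}$ the integral equation above (with $t_1=0,t_2=s$) has a unique continuous solution $z(t)=x(t)+y(t)$, $x(t)\in X_{t\omega}$, $y(t)\in Y_{t\omega}$, $t\in[0,s]$, with $x(0)=x_1$, $y(s)=y_2$; set $F_{s,\omega}(x_1,y_2)=x(s)$, $G_{s,\omega}(x_1,y_2)=y(0)$ and define the correspondence $H(s,\omega):X_\omega\oplus Y_\omega\to X_{s\omega}\oplus Y_{s\omega}$ by $(x_2,y_2)\in H(s,\omega)(x_1,y_1)$ iff $y_1=G_{s,\omega}(x_1,y_2)$ and $x_2=F_{s,\omega}(x_1,y_2)$. (A)(B) condition: a correspondence $H$ (a nonempty subset $\mathrm{Graph}H$ of $(X_1\times Y_1)\times(X_2\times Y_2)$, metric spaces with distances written $|u-v|$) satisfies (A)$(\alpha;\alpha',\lambda_u)$ (B)$(\beta;\beta',\lambda_s)$ if for all $(x_1,y_1)\times(x_2,y_2)$, $(x_1',y_1')\times(x_2',y_2')\in\mathrm{Graph}H$: (A1) $|x_1-x_1'|\le\alpha|y_1-y_1'|$ implies $|x_2-x_2'|\le\alpha'|y_2-y_2'|$; (A2) $|x_1-x_1'|\le\alpha|y_1-y_1'|$ implies $|y_1-y_1'|\le\lambda_u|y_2-y_2'|$; (B1) $|y_2-y_2'|\le\beta|x_2-x_2'|$ implies $|y_1-y_1'|\le\beta'|x_1-x_1'|$; (B2) $|y_2-y_2'|\le\beta|x_2-x_2'|$ implies $|x_2-x_2'|\le\lambda_s|x_1-x_1'|$. (A)$(\alpha,\lambda_u)$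 (B)$(\beta,\lambda_s)$ means $\alpha'=\alpha$, $\beta'=\beta$. Here the fibers carry the norm of $Z$. *)

From Stdlib Require Import Reals.
From Coquelicot Require Import Coquelicot.
Open Scope R_scope.

Record TopSpace := {
  tcar :> Type;
  topen : (tcar -> Prop) -> Prop;
  topen_full : topen (fun _ => True);
  topen_inter : forall U V, topen U -> topen V -> topen (fun x => U x /\ V x);
  topen_union : forall F : (tcar -> Prop) -> Prop,
      (forall U, F U -> topen U) -> topen (fun x => exists U, F U /\ U x)
}.
Arguments topen {t} _.

Definition Hausdorff (M : TopSpace) : Prop :=
  forall a b : M, a <> b -> exists U V, topen U /\ topen V /\ U a /\ V b /\
    forall x, ~ (U x /\ V x).

Definition semiflow (M : TopSpace) (phi : R -> M -> M) : Prop :=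
  (forall w, phi 0 w = w) /\
  (forall t s w, 0 <= t -> 0 <= s -> phi (t + s) w = phi t (phi s w)) /\
  (forall t0 w0, 0 <= t0 -> forall V, topen V -> V (phi t0 w0) ->
     exists d, 0 < d /\ exists U, topen U /\ U w0 /\
       forall t w, 0 <= t -> Rabs (t - t0) < d -> U w -> V (phi t w)).

Definition Zsp (X Y : CompleteNormedModule R_AbsRing) : NormedModule R_AbsRing :=
  prod_NormedModule R_AbsRing X Y.

Definition PX {X Y : CompleteNormedModule R_AbsRing} (z : Zsp X Y) : X := fst z.
Definition PY {X Y : CompleteNormedModule R_AbsRing} (z : Zsp X Y) : Y := snd z.

Definition cont_MZ {M : TopSpace} {U V : NormedModule R_AbsRing}
  (g : M -> U -> V) : Prop :=
  forall w0 z0 e, 0 < e -> exists O, topen O /\ O w0 /\ exists d, 0 < d /\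
    forall w z, O w -> norm (minus z z0) < d -> norm (minus (g w z) (g w0 z0)) < e.

Definition cont_RMZ {M : TopSpace} {U V : NormedModule R_AbsRing}
  (g : R -> M -> U -> V) : Prop :=
  forall t0 w0 z0 e, 0 <= t0 -> 0 < e -> exists O, topen O /\ O w0 /\
    exists d, 0 < d /\ forall t w z, 0 <= t -> Rabs (t - t0) < d -> O w ->
      norm (minus z z0) < d -> norm (minus (g t w z) (g t0 w0 z0)) < e.

Definition C0_semigroup {V : NormedModule R_AbsRing} (T : R -> V -> V) : Prop :=
  (forall x, T 0 x = x) /\
  (forall t s x, 0 <= t -> 0 <= s -> T (t + s) x = T t (T s x)) /\
  (forall t, 0 <= t -> is_linear (T t)) /\
  (forall x t0 e, 0 <= t0 -> 0 < e -> exists d, 0 < d /\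
     forall t, 0 <= t -> Rabs (t - t0) < d -> norm (minus (T t x) (T t0 x)) < e).

Definition D1 {M : TopSpace} {Z : NormedModule R_AbsRing}
  (phi : R -> M -> M) (L : M -> Z -> Z) : Prop :=
  (forall w, is_linear (L w)) /\ cont_MZ L /\
  (forall w0, exists O, topen O /\ O w0 /\ exists K,
     forall w t z, O w -> 0 <= t -> norm (L (phi t w) z) <= K * norm z).

(* eps0 = sup_{t>=0} Lip f(t w)(.)  (Lipschitz constants are >= 0) *)
Definition is_sup_Lip {M : TopSpace} {Z : NormedModule R_AbsRing}
  (phi : R -> M -> M) (f : M -> Z -> Z) (w : M) (eps0 : R) : Prop :=
  0 <= eps0 /\
  (forall t z z', 0 <= t ->
     norm (minus (f (phi t w) z) (f (phi t w) z')) <= eps0 * norm (minus z z')) /\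
  (forall e, 0 <= e ->
     (forall t z z', 0 <= t ->
        norm (minus (f (phi t w) z) (f (phi t w) z')) <= e * norm (minus z z')) ->
     eps0 <= e).

Definition D2 {M : TopSpace} {Z : NormedModule R_AbsRing}
  (phi : R -> M -> M) (f : M -> Z -> Z) (eps : M -> R) : Prop :=
  cont_MZ f /\ (forall w, is_sup_Lip phi f w (eps w)) /\
  (forall w0, exists O, topen O /\ O w0 /\ exists K, forall w, O w -> eps w <= K).

(* fibers: X_w = range P_w, Y_w = ker P_w *)
Definition inX {M : TopSpace} {Z : NormedModule R_AbsRing}
  (P : M -> Z -> Z) (w : M) (z : Z) : Prop := P w z = z.
Definition inY {M : TopSpace} {Z : NormedModule R_AbsRing}
  (P : M -> Z -> Z) (w : M) (z : Z) : Prop := P w z = zero.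
Definition Pc {M : TopSpace} {Z : NormedModule R_AbsRing}
  (P : M -> Z -> Z) (w : M) (z : Z) : Z := minus z (P w z).

(* Uniform dichotomy on R_+ (items (a)-(d)).
   T1 t w : X_w -> X_{t w}   is T_1(t, w);
   S1 t w : Y_{t w} -> Y_w   is S_1(-t, t w). *)
Definition uniform_dichotomy {M : TopSpace} {Z : NormedModule R_AbsRing}
  (phi : R -> M -> M) (P : M -> Z -> Z) (T1 S1 : R -> M -> Z -> Z)
  (C1 : R) (mu_s mu_u : M -> R) : Prop :=
  (forall w, is_linear (P w)) /\ (forall w z, P w (P w z) = P w z) /\ cont_MZ P /\
  (forall t w x, 0 <= t -> inX P w x -> inX P (phi t w) (T1 t w x)) /\
  (forall t w x y, 0 <= t -> inX P w x -> inX P w y ->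
      T1 t w (plus x y) = plus (T1 t w x) (T1 t w y)) /\
  (forall t w (k : R) x, 0 <= t -> inX P w x -> T1 t w (scal k x) = scal k (T1 t w x)) /\
  (forall w x, inX P w x -> T1 0 w x = x) /\
  (forall t s w x, 0 <= t -> 0 <= s -> inX P w x ->
      T1 (t + s) w x = T1 t (phi s w) (T1 s w x)) /\
  cont_RMZ (fun t w z => T1 t w (P w z)) /\
  (forall t w y, 0 <= t -> inY P (phi t w) y -> inY P w (S1 t w y)) /\
  (forall t w x y, 0 <= t -> inY P (phi t w) x -> inY P (phi t w) y ->
      S1 t w (plus x y) = plus (S1 t w x) (S1 t w y)) /\
  (forall t w (k : R) y, 0 <= t -> inY P (phi t w) y ->
      S1 t w (scal k y) = scal k (S1 t w y)) /\
  (forall w y, inY P w y -> S1 0 w y = y) /\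
  (forall t s w y, 0 <= t -> 0 <= s -> inY P (phi (t + s) w) y ->
      S1 (t + s) w y = S1 s w (S1 t (phi s w) y)) /\
  cont_RMZ (fun t w z => S1 t w (Pc P (phi t w) z)) /\
  (forall w z, norm (P w z) <= C1 * norm z /\ norm (Pc P w z) <= C1 * norm z) /\
  (forall t r w x, 0 <= t -> 0 <= r -> inX P (phi r w) x ->
      norm (T1 t (phi r w) x) <= exp (mu_s w * t) * norm x) /\
  (forall t r w y, 0 <= t -> 0 <= r -> inY P (phi t (phi r w)) y ->
      norm (S1 t (phi r w) y) <= exp (- mu_u w * t) * norm y).

Definition UD_compat {M : TopSpace} {X Y : CompleteNormedModule R_AbsRing}
  (phi : R -> M -> M) (T : R -> X -> X) (S : R -> Y -> Y) (L : M -> Zsp X Y -> Zsp X Y)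
  (P : M -> Zsp X Y -> Zsp X Y) (T1 S1 : R -> M -> Zsp X Y -> Zsp X Y) : Prop :=
  forall w t1 t2 x1 y2, 0 <= t1 -> t1 <= t2 ->
    inX P (phi t1 w) x1 -> inY P (phi t2 w) y2 ->
    let z := fun t => plus (T1 (t - t1) (phi t1 w) x1) (S1 (t2 - t) (phi t w) y2) in
    forall t, t1 <= t -> t <= t2 ->
      (exists I, is_RInt (fun s => T (t - s) (PX (L (phi s w) (z s)))) t1 t I /\
         PX (z t) = plus (T (t - t1) (PX (z t1))) I) /\
      (exists J, is_RInt (fun s => S (t - s) (PY (L (phi s w) (z s)))) t t2 J /\
         PY (z t) = minus (S (t - t2) (PY (z t2))) J).

(* z : [0,s] -> Z is a continuous solution of the nonlinear integral equation
   (t1 = 0, t2 = s), with x(t) = P_{t w} z(t), y(t) = P^c_{t w} z(t). *)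
Definition is_solution {M : TopSpace} {Z : NormedModule R_AbsRing}
  (phi : R -> M -> M) (P : M -> Z -> Z) (T1 S1 : R -> M -> Z -> Z)
  (f : M -> Z -> Z) (s : R) (w : M) (z : R -> Z) : Prop :=
  (forall t0 e, 0 <= t0 -> t0 <= s -> 0 < e -> exists d, 0 < d /\
     forall t, 0 <= t -> t <= s -> Rabs (t - t0) < d -> norm (minus (z t) (z t0)) < e) /\
  (forall t, 0 <= t -> t <= s ->
     (exists I, is_RInt (fun r => T1 (t - r) (phi r w) (P (phi r w) (f (phi r w) (z r))))
                  0 t I /\
        P (phi t w) (z t) = plus (T1 t w (P w (z 0))) I) /\
     (exists J, is_RInt (fun r => S1 (r - t) (phi t w) (Pc P (phi r w) (f (phi r w) (z r))))
                  t s J /\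
        Pc P (phi t w) (z t) = minus (S1 (s - t) (phi t w) (Pc P (phi s w) (z s))) J)).

(* graph of the induced cocycle correspondence H(s, w):
   (x2,y2) in H(s,w)(x1,y1) iff y1 = G_{s,w}(x1,y2), x2 = F_{s,w}(x1,y2). *)
Definition H_graph {M : TopSpace} {Z : NormedModule R_AbsRing}
  (phi : R -> M -> M) (P : M -> Z -> Z) (T1 S1 : R -> M -> Z -> Z)
  (f : M -> Z -> Z) (s : R) (w : M) (x1 y1 x2 y2 : Z) : Prop :=
  inX P w x1 /\ inY P (phi s w) y2 /\
  exists z, is_solution phi P T1 S1 f s w z /\
    P w (z 0) = x1 /\ Pc P (phi s w) (z s) = y2 /\
    y1 = Pc P w (z 0) /\ x2 = P (phi s w) (z s).

Definition AB_cond {Z : NormedModule R_AbsRing} (H : Z -> Z -> Z -> Z -> Prop)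
  (alpha alpha' lam_u beta beta' lam_s : R) : Prop :=
  forall x1 y1 x2 y2 x1' y1' x2' y2',
    H x1 y1 x2 y2 -> H x1' y1' x2' y2' ->
    (norm (minus x1 x1') <= alpha * norm (minus y1 y1') ->
       norm (minus x2 x2') <= alpha' * norm (minus y2 y2')) /\
    (norm (minus x1 x1') <= alpha * norm (minus y1 y1') ->
       norm (minus y1 y1') <= lam_u * norm (minus y2 y2')) /\
    (norm (minus y2 y2') <= beta * norm (minus x2 x2') ->
       norm (minus y1 y1') <= beta' * norm (minus x1 x1')) /\
    (norm (minus y2 y2') <= beta * norm (minus x2 x2') ->
       norm (minus x2 x2') <= lam_s * norm (minus x1 x1')).

From Stdlib Require Import Reals Lra Psatz.
From Coquelicot Require Import Coquelicot.
Open Scope R_scope.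

(* Let z, z' solve the integral equation on [0, t] and let a(r), b(r) be the distances of
   their X- and Y-components.  The dichotomy estimates and the Lipschitz bound show that a and b
   satisfy the variation-of-constants inequalities of the linear system
     A' = (mu_s + d) A + d B,   B' = (mu_u - d) B - d A,   d = C1 eps  (so eps' = 2 d),
   and since mu_u - mu_s > 4 d a contraction argument gives a <= A, b <= B for the solution with
   A(0) = a(0), B(t) = b(t).  For this system the cone {A <= h B} is forward invariant: with
   phi = c + (h - c) exp (- sigma r) and c = eps' / sigma, the function A - phi B satisfies a
   linear differential inequality, which yields the contraction of apertures; inside the cone B
   grows at rate at least mu_u - eps', which yields lambda_u.  The (B) conditions are the same
   statements for the time-reversed system. *)

Lemma exp_le x y : x <= y -> exp x <= exp y.
Proof. intros [h | ->]; [left; apply exp_increasing, h | lra]. Qed.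

Lemma exp_le_1 x : x <= 0 -> exp x <= 1.
Proof. intros h. rewrite <- exp_0. apply exp_le, h. Qed.

Lemma Rpower_exp a t : Rpower (exp a) t = exp (t * a).
Proof. unfold Rpower. rewrite ln_exp. reflexivity. Qed.

Lemma gronwall_is_derive (D dD K k : R -> R) a b : a <= b ->
  (forall x, is_derive D x (dD x)) -> (forall x, is_derive K x (k x)) ->
  (forall x, a <= x <= b -> dD x <= k x * D x) ->
  D b * exp (- K b) <= D a * exp (- K a).
Proof.
  intros hab hD hK hle.
  set (G := fun x => D x * exp (- K x)).
  set (dG := fun x => (dD x - k x * D x) * exp (- K x)).
  assert (hG : forall x, is_derive G x (dG x)).
  { intros x. unfold G, dG. auto_derive.
    - repeat split; [exists (dD x) | exists (k x)]; auto.
    - replace (Derive (fun y => D y) x) with (dD x) by (symmetry; apply is_derive_unique, hD).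
      replace (Derive (fun y => K y) x) with (k x) by (symmetry; apply is_derive_unique, hK).
      ring. }
  destruct (MVT_gen G a b dG) as (c & hc & hGc).
  - intros x _. apply hG.
  - intros x _. apply continuity_pt_filterlim.
    apply (@ex_derive_continuous R_AbsRing R_NormedModule). exists (dG x). apply hG.
  - rewrite Rmin_left, Rmax_right in hc by lra.
    assert (dG c <= 0).
    { unfold dG. assert (0 < exp (- K c)) by apply exp_pos.
      assert (dD c - k c * D c <= 0) by (apply Rle_minus, hle, hc). nra. }
    unfold G in hGc. nra.
Qed.

(* Aperture at time r of the invariant cone of aperture al at time 0, with limit c. *)
Definition cone_slope (c sg al r : R) : R := c + (al - c) * exp (- sg * r).

Lemma cone_slope_0 c sg al : cone_slope c sg al 0 = al.
Proof. unfold cone_slope. rewrite Rmult_0_r, exp_0. ring. Qed.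

Lemma cone_slope_between c sg al r : 0 <= sg -> c <= al -> 0 <= r ->
  c <= cone_slope c sg al r <= al.
Proof.
  intros hsg hal hr. unfold cone_slope.
  assert (0 < exp (- sg * r)) by apply exp_pos.
  assert (exp (- sg * r) <= 1) by (apply exp_le_1; nra).
  nra.
Qed.

Lemma cone_slope_antitone c sg al r r' : 0 <= sg -> c <= al -> r <= r' ->
  cone_slope c sg al r' <= cone_slope c sg al r.
Proof.
  intros hsg hal hr. unfold cone_slope.
  assert (exp (- sg * r') <= exp (- sg * r)) by (apply exp_le; nra).
  nra.
Qed.

Lemma cone_slope_le_uniform c sg al C Dl eps1 t : c <= C -> C <= al -> 0 <= Dl <= sg ->
  0 <= eps1 <= t -> cone_slope c sg al t <= al - (al - C) * (1 - exp (- Dl * eps1)).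
Proof.
  intros hc hC hDl ht. unfold cone_slope.
  assert (exp (- sg * t) <= exp (- Dl * eps1)) by (apply exp_le; nra).
  assert (exp (- Dl * eps1) <= 1) by (apply exp_le_1; nra).
  nra.
Qed.

(* The paper's lower bound for k_h is cone_slope at time eps1, divided by h. *)
Lemma cone_slope_le_paper_bound ep sg al eps1 t k : 0 < sg -> 0 <= ep -> ep / sg < al ->
  eps1 <= t -> ((sg - ep / al) * exp (- sg * eps1) + ep / al) / sg <= k ->
  cone_slope (ep / sg) sg al t <= k * al.
Proof.
  intros hsg hep hal ht hk.
  assert (0 <= ep / sg) by (apply Rle_mult_inv_pos; lra).
  eapply Rle_trans; [apply cone_slope_antitone; [lra | lra | exact ht] |].
  replace (cone_slope (ep / sg) sg al eps1)
    with (((sg - ep / al) * exp (- sg * eps1) + ep / al) / sg * al)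
    by (unfold cone_slope; field; lra).
  apply Rmult_le_compat_r; lra.
Qed.

Section LinearSystem.

Variables (m n d : R) (A B : R -> R).
Hypothesis A_deriv : forall x, is_derive A x ((m + d) * A x + d * B x).
Hypothesis B_deriv : forall x, is_derive B x ((n - d) * B x - d * A x).

Lemma system_ex_derive x : ex_derive A x /\ ex_derive B x.
Proof. split; eexists; [apply A_deriv | apply B_deriv]. Qed.

Lemma system_Derive x :
  Derive (fun y => A y) x = (m + d) * A x + d * B x /\
  Derive (fun y => B y) x = (n - d) * B x - d * A x.
Proof. split; apply is_derive_unique; [apply A_deriv | apply B_deriv]. Qed.

Lemma system_continuous x : continuous A x /\ continuous B x.
Proof. split; apply (@ex_derive_continuous R_AbsRing R_NormedModule), system_ex_derive. Qed.

Lemma system_duhamel_forward r :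
  is_RInt (fun u => exp (m * (r - u)) * (d * (A u + B u))) 0 r (A r - exp (m * r) * A 0).
Proof.
  replace (A r - exp (m * r) * A 0) with
    (minus (exp (m * (r - r)) * A r) (exp (m * (r - 0)) * A 0)).
  - apply (is_RInt_derive (fun u => exp (m * (r - u)) * A u)).
    + intros x _. auto_derive; [repeat split; apply system_ex_derive |].
      rewrite (proj1 (system_Derive x)). unfold Rminus. ring.
    + intros x _. apply (@ex_derive_continuous R_AbsRing R_NormedModule). auto_derive.
      repeat split; apply system_ex_derive.
  - unfold minus, plus, opp; simpl. rewrite Rminus_diag, Rminus_0_r, Rmult_0_r, exp_0. ring.
Qed.

Lemma system_duhamel_backward t r :
  is_RInt (fun u => exp (- n * (u - r)) * (d * (A u + B u))) r t
    (B r - exp (- n * (t - r)) * B t).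
Proof.
  replace (B r - exp (- n * (t - r)) * B t) with
    (minus (- (exp (- n * (t - r)) * B t)) (- (exp (- n * (r - r)) * B r))).
  - apply (is_RInt_derive (fun u => - (exp (- n * (u - r)) * B u))).
    + intros x _. auto_derive; [repeat split; apply system_ex_derive |].
      rewrite (proj2 (system_Derive x)). unfold Rminus. ring.
    + intros x _. apply (@ex_derive_continuous R_AbsRing R_NormedModule). auto_derive.
      repeat split; apply system_ex_derive.
  - unfold minus, plus, opp; simpl. rewrite Rminus_diag, Rmult_0_r, exp_0. ring.
Qed.

Hypothesis d_ge0 : 0 <= d.
Hypothesis gap : 0 < n - m - 2 * d.

Let sg := n - m - 2 * d.
Let c := 2 * d / sg.

Lemma system_cone_forward t al : c <= al <= 1 ->
  (forall r, 0 <= r <= t -> 0 <= B r) -> A 0 <= al * B 0 ->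
  forall r, 0 <= r <= t -> A r <= cone_slope c sg al r * B r.
Proof.
  intros hal hB h0 r hr.
  assert (hsg : 0 < sg) by exact gap.
  assert (hc : 0 <= c) by (apply Rle_mult_inv_pos; lra).
  set (phi := cone_slope c sg al).
  set (D := fun x => A x - phi x * B x).
  set (k := fun x => m + d + d * phi x).
  set (K := fun x => (m + d + d * c) * x - d * (al - c) * exp (- sg * x) / sg).
  (* phi' = - sg (phi - c) and sg c = 2 d turn D' into k D + d (phi^2 - 1) B *)
  assert (hD : forall x, is_derive D x (k x * D x + d * (phi x ^ 2 - 1) * B x)).
  { intros x. unfold D, k, phi, cone_slope. auto_derive; [repeat split; apply system_ex_derive |].
    destruct (system_Derive x) as [-> ->]. unfold c, sg in *. field. lra. }
  assert (hK : forall x, is_derive K x (k x)).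
  { intros x. unfold K, k, phi, cone_slope. auto_derive; [easy |]. field. lra. }
  assert (hDK := gronwall_is_derive D _ K k 0 r (proj1 hr) hD hK).
  assert (D r * exp (- K r) <= 0).
  { eapply Rle_trans; [apply hDK |].
    - intros x hx.
      assert (c <= phi x <= al) by (apply cone_slope_between; lra).
      assert (0 <= B x) by (apply hB; lra).
      assert (0 <= d * (1 - phi x ^ 2) * B x) by (apply Rmult_le_pos; [apply Rmult_le_pos|]; nra).
      lra.
    - unfold D, phi. rewrite cone_slope_0.
      assert (0 < exp (- K 0)) by apply exp_pos. nra. }
  assert (0 < exp (- K r)) by apply exp_pos.
  unfold D in *. nra.
Qed.

Lemma system_growth_forward t al : 0 <= t -> c <= al <= 1 ->
  (forall r, 0 <= r <= t -> 0 <= B r) -> A 0 <= al * B 0 ->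
  B 0 <= exp (- (n - 2 * d) * t) * B t.
Proof.
  intros ht hal hB h0.
  assert (hDK := gronwall_is_derive (fun x => - B x) (fun x => - ((n - d) * B x - d * A x))
    (fun x => (n - 2 * d) * x) (fun _ => n - 2 * d) 0 t ht).
  rewrite Rmult_0_r, Ropp_0, exp_0, Rmult_1_r in hDK.
  replace (- ((n - 2 * d) * t)) with (- (n - 2 * d) * t) in hDK by ring.
  enough (- B t * exp (- (n - 2 * d) * t) <= - B 0) by lra.
  apply hDK.
  - intros x. auto_derive; [repeat split; apply system_ex_derive |].
    rewrite (proj2 (system_Derive x)). ring.
  - intros x. auto_derive; [easy | ring].
  - intros x hx.
    assert (c <= cone_slope c sg al x <= al) by (apply cone_slope_between; unfold sg; lra).
    assert (A x <= cone_slope c sg al x * B x) by (apply (system_cone_forward t al); auto).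
    assert (0 <= B x) by auto.
    assert (A x <= B x) by nra.
    assert (0 <= d * (B x - A x)) by (apply Rmult_le_pos; lra).
    lra.
Qed.

End LinearSystem.

Lemma system_time_reversal m n d (A B : R -> R) t :
  (forall x, is_derive A x ((m + d) * A x + d * B x)) ->
  (forall x, is_derive B x ((n - d) * B x - d * A x)) ->
  (forall x, is_derive (fun r => B (t - r)) x ((- n + d) * B (t - x) + d * A (t - x))) /\
  (forall x, is_derive (fun r => A (t - r)) x ((- m - d) * A (t - x) - d * B (t - x))).
Proof.
  intros hA hB.
  assert (hrev : forall x, is_derive (fun r => t - r) x (-1)).
  { intros x. auto_derive; [easy | ring]. }
  split; intros x.
  - replace (_ + _) with (scal (-1) ((n - d) * B (t - x) - d * A (t - x))).
    + apply (is_derive_comp B (fun r => t - r)); [apply hB | apply hrev].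
    + unfold scal; simpl; unfold mult; simpl. ring.
  - replace (_ - _) with (scal (-1) ((m + d) * A (t - x) + d * B (t - x))).
    + apply (is_derive_comp A (fun r => t - r)); [apply hA | apply hrev].
    + unfold scal; simpl; unfold mult; simpl. ring.
Qed.

Section SystemCones.

Variables (m n d t : R) (A B : R -> R).
Hypothesis A_deriv : forall x, is_derive A x ((m + d) * A x + d * B x).
Hypothesis B_deriv : forall x, is_derive B x ((n - d) * B x - d * A x).
Hypothesis d_ge0 : 0 <= d.
Hypothesis gap : 0 < n - m - 2 * d.
Hypothesis t_ge0 : 0 <= t.
Hypothesis A_ge0 : forall r, 0 <= r <= t -> 0 <= A r.
Hypothesis B_ge0 : forall r, 0 <= r <= t -> 0 <= B r.

Let sg := n - m - 2 * d.
Let c := 2 * d / sg.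

(* The backward estimates are the forward ones for the time-reversed system. *)
Let reversed_system := system_time_reversal m n d A B t A_deriv B_deriv.

Let reversed_ge0 r : 0 <= r <= t -> 0 <= A (t - r).
Proof. intros hr. apply A_ge0. lra. Qed.

Let reversed_gap : 0 < - m - - n - 2 * d.
Proof. lra. Qed.

Let reversed_sg : - m - - n - 2 * d = sg.
Proof. unfold sg. ring. Qed.

Lemma system_cone_backward be : c <= be <= 1 -> B t <= be * A t ->
  B 0 <= cone_slope c sg be t * A 0.
Proof.
  intros hbe h.
  assert (hr := system_cone_forward (- n) (- m) d (fun r => B (t - r)) (fun r => A (t - r))
    (proj1 reversed_system) (proj2 reversed_system) d_ge0 reversed_gap t be).
  rewrite reversed_sg, Rminus_0_r in hr.
  specialize (hr hbe reversed_ge0 h t (conj t_ge0 (Rle_refl t))).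
  rewrite Rminus_diag in hr. exact hr.
Qed.

Lemma system_growth_backward be : c <= be <= 1 -> B t <= be * A t ->
  A t <= exp ((m + 2 * d) * t) * A 0.
Proof.
  intros hbe h.
  assert (hr := system_growth_forward (- n) (- m) d (fun r => B (t - r)) (fun r => A (t - r))
    (proj1 reversed_system) (proj2 reversed_system) d_ge0 reversed_gap t be t_ge0).
  rewrite reversed_sg, Rminus_0_r, Rminus_diag in hr.
  replace ((m + 2 * d) * t) with (- (- m - 2 * d) * t) by ring.
  apply hr; [exact hbe | exact reversed_ge0 | exact h].
Qed.

Lemma system_cone_conditions dx1 dy1 dx2 dy2 al be ka kb :
  A 0 = dx1 -> B t = dy2 -> dy1 <= B 0 -> dx2 <= A t ->
  c <= al <= 1 -> c <= be <= 1 ->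
  cone_slope c sg al t <= ka * al -> cone_slope c sg be t <= kb * be ->
  (dx1 <= al * dy1 -> dx2 <= ka * al * dy2) /\
  (dx1 <= al * dy1 -> dy1 <= exp (- (n - 2 * d) * t) * dy2) /\
  (dy2 <= be * dx2 -> dy1 <= kb * be * dx1) /\
  (dy2 <= be * dx2 -> dx2 <= exp ((m + 2 * d) * t) * dx1).
Proof.
  intros hA0 hBt hy1 hx2 hal hbe hka hkb.
  assert (hc : 0 <= c) by (apply Rle_mult_inv_pos; [| exact gap]; lra).
  assert (hA_cone : dx1 <= al * dy1 -> A 0 <= al * B 0).
  { intros h. rewrite hA0. eapply Rle_trans; [exact h |]. apply Rmult_le_compat_l; lra. }
  assert (hB_cone : dy2 <= be * dx2 -> B t <= be * A t).
  { intros h. rewrite hBt. eapply Rle_trans; [exact h |]. apply Rmult_le_compat_l; lra. }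
  assert (B_t_ge0 := B_ge0 t ltac:(lra)). assert (A_0_ge0 := A_ge0 0 ltac:(lra)).
  split; [| split; [| split]]; intros h.
  - assert (hcone := system_cone_forward m n d A B A_deriv B_deriv d_ge0 gap t al hal B_ge0
      (hA_cone h) t ltac:(lra)).
    fold sg c in hcone. rewrite <- hBt.
    assert (cone_slope c sg al t * B t <= ka * al * B t) by (apply Rmult_le_compat_r; lra).
    lra.
  - rewrite <- hBt. eapply Rle_trans; [exact hy1 |].
    apply (system_growth_forward m n d A B A_deriv B_deriv d_ge0 gap t al t_ge0 hal B_ge0
      (hA_cone h)).
  - assert (hcone := system_cone_backward be hbe (hB_cone h)).
    rewrite <- hA0.
    assert (cone_slope c sg be t * A 0 <= kb * be * A 0) by (apply Rmult_le_compat_r; lra).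
    lra.
  - rewrite <- hA0. eapply Rle_trans; [exact hx2 |].
    apply (system_growth_backward be hbe (hB_cone h)).
Qed.

End SystemCones.

(* The system has eigenvectors (q, d) and (d, q), q being the larger root of
   q^2 - (n - m - 2d) q + d^2 = 0; the boundary values fix their coefficients. *)
Lemma system_bvp_exists m n d t a0 bt : 0 <= d -> 4 * d < n - m -> 0 <= t ->
  exists A B : R -> R,
    (forall x, is_derive A x ((m + d) * A x + d * B x)) /\
    (forall x, is_derive B x ((n - d) * B x - d * A x)) /\
    A 0 = a0 /\ B t = bt.
Proof.
  intros hd hg ht.
  set (g := n - m - 2 * d).
  set (s := sqrt (g * g - 4 * d * d)).
  assert (hs : s * s = g * g - 4 * d * d) by (apply sqrt_sqrt; unfold g; nra).
  assert (hs0 : 0 <= s) by apply sqrt_pos.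
  set (q := (g + s) / 2).
  assert (hq : q * q - g * q + d * d = 0) by (unfold q; nra).
  assert (hqd : d < q) by (unfold q, g; lra).
  set (l1 := n - d - q). set (l2 := m + d + q).
  set (e1 := exp (l1 * t)). set (e2 := exp (l2 * t)).
  assert (he1 : 0 < e1) by apply exp_pos.
  assert (he12 : e1 <= e2) by (apply exp_le; unfold l1, l2, q, g; nra).
  set (det := q * q * e2 - d * d * e1).
  assert (hdet : 0 < det) by (unfold det; assert (d * d < q * q) by nra; nra).
  set (c1 := (a0 * q * e2 - d * bt) / det).
  set (c2 := (q * bt - d * e1 * a0) / det).
  exists (fun x => c1 * q * exp (l1 * x) + c2 * d * exp (l2 * x)).
  exists (fun x => c1 * d * exp (l1 * x) + c2 * q * exp (l2 * x)).
  assert (k1 : q * l1 = (m + d) * q + d * d) by (unfold l1, g in *; nra).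
  assert (k2 : q * l2 = (n - d) * q - d * d) by (unfold l2, g in *; nra).
  split; [| split; [| split]].
  - intros x. auto_derive; [easy |].
    assert (c1 * exp (l1 * x) * (q * l1) = c1 * exp (l1 * x) * ((m + d) * q + d * d))
      by (rewrite k1; ring).
    change (@eq R ?l ?r) with (@eq R l r). unfold l2. lra.
  - intros x. auto_derive; [easy |].
    assert (c2 * exp (l2 * x) * (q * l2) = c2 * exp (l2 * x) * ((n - d) * q - d * d))
      by (rewrite k2; ring).
    change (@eq R ?l ?r) with (@eq R l r). unfold l1. lra.
  - rewrite !Rmult_0_r, exp_0. unfold c1, c2, det. field. unfold det in hdet. lra.
  - fold e1 e2. unfold c1, c2, det. field. unfold det in hdet. lra.
Qed.

Lemma le_0_of_le_geometric x y th : 0 <= th < 1 -> (forall k, x <= th ^ k * y) -> x <= 0.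
Proof.
  intros hth h.
  assert (hlim := is_lim_seq_scal_r _ y _ (is_lim_seq_geom th ltac:(rewrite Rabs_right; lra))).
  assert (hle := is_lim_seq_le _ _ _ _ h (is_lim_seq_const x) hlim).
  simpl in hle. lra.
Qed.

Lemma is_RInt_exp_kernel_forward m l C r : l <> m ->
  is_RInt (fun u => exp (m * (r - u)) * (C * exp (l * u))) 0 r
    (C * (exp (l * r) - exp (m * r)) / (l - m)).
Proof.
  intros hl.
  replace (C * (exp (l * r) - exp (m * r)) / (l - m)) with
    (minus (C * (exp (m * (r - r)) * exp (l * r)) / (l - m))
           (C * (exp (m * (r - 0)) * exp (l * 0)) / (l - m))).
  - apply (is_RInt_derive (fun u => C * (exp (m * (r - u)) * exp (l * u)) / (l - m))).
    + intros x _. auto_derive; [easy |]. unfold Rminus. field. lra.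
    + intros x _. apply (@ex_derive_continuous R_AbsRing R_NormedModule). auto_derive. easy.
  - unfold minus, plus, opp; simpl.
    rewrite Rminus_diag, Rminus_0_r, !Rmult_0_r, exp_0. field. lra.
Qed.

Lemma is_RInt_exp_kernel_backward n l C r t : l <> n ->
  is_RInt (fun u => exp (- n * (u - r)) * (C * exp (l * u))) r t
    (C * (exp (l * r) - exp (- n * (t - r)) * exp (l * t)) / (n - l)).
Proof.
  intros hl.
  replace (C * (exp (l * r) - exp (- n * (t - r)) * exp (l * t)) / (n - l)) with
    (minus (- (C * (exp (- n * (t - r)) * exp (l * t)) / (n - l)))
           (- (C * (exp (- n * (r - r)) * exp (l * r)) / (n - l)))).
  - apply (is_RInt_derive (fun u => - (C * (exp (- n * (u - r)) * exp (l * u)) / (n - l)))).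
    + intros x _. auto_derive; [easy |]. unfold Rminus. field. lra.
    + intros x _. apply (@ex_derive_continuous R_AbsRing R_NormedModule). auto_derive. easy.
  - unfold minus, plus, opp; simpl.
    rewrite Rminus_diag, !Rmult_0_r, exp_0. field. lra.
Qed.

Section Comparison.

Variables (m n d t : R) (a b N A B : R -> R).
Hypothesis d_ge0 : 0 <= d.
Hypothesis gap : 4 * d < n - m.
Hypothesis t_ge0 : 0 <= t.
Hypothesis A_deriv : forall x, is_derive A x ((m + d) * A x + d * B x).
Hypothesis B_deriv : forall x, is_derive B x ((n - d) * B x - d * A x).
Hypothesis A_0 : A 0 = a 0.
Hypothesis B_t : B t = b t.
Hypothesis N_le : forall r, 0 <= r <= t -> N r <= a r + b r.
Hypothesis a_duhamel : forall r, 0 <= r <= t -> exists I,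
  is_RInt (fun u => exp (m * (r - u)) * (d * N u)) 0 r I /\ a r <= exp (m * r) * a 0 + I.
Hypothesis b_duhamel : forall r, 0 <= r <= t -> exists J,
  is_RInt (fun u => exp (- n * (u - r)) * (d * N u)) r t J /\
  b r <= exp (- n * (t - r)) * b t + J.
Hypothesis ab_bounded : exists K, forall r, 0 <= r <= t -> a r <= K /\ b r <= K.

(* Since 4 d < n - m, each Duhamel step shrinks sup_r excess r * exp (- l r) by the factor th. *)
Let l := (m + n) / 2.
Let th := 4 * d / (n - m).
Let excess r := Rmax (a r - A r) 0 + Rmax (b r - B r) 0.

Let th_bounds : 0 <= th < 1.
Proof.
  unfold th. split; [apply Rle_mult_inv_pos; lra |].
  apply (Rmult_lt_reg_r (n - m)); [lra |]. field_simplify; lra.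
Qed.

Let excess_ge0 r : 0 <= excess r.
Proof. unfold excess. generalize (Rmax_r (a r - A r) 0) (Rmax_r (b r - B r) 0). lra. Qed.

Let defect_le_excess u : 0 <= u <= t -> N u - (A u + B u) <= excess u.
Proof.
  intros hu. unfold excess.
  generalize (N_le u hu) (Rmax_l (a u - A u) 0) (Rmax_l (b u - B u) 0). lra.
Qed.

Let excess_bound_ge0 C : (forall u, 0 <= u <= t -> excess u <= C * exp (l * u)) -> 0 <= C.
Proof.
  intros hC. assert (h := hC 0 ltac:(lra)). rewrite Rmult_0_r, exp_0, Rmult_1_r in h.
  generalize (excess_ge0 0). lra.
Qed.

Lemma excess_bounded : exists K, forall r, 0 <= r <= t -> excess r <= K * exp (l * r).
Proof.
  destruct ab_bounded as [K hK].
  destruct (continuity_ab_min A 0 t t_ge0) as (xA & hxA & _).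
  { intros x _. apply continuity_pt_filterlim, (system_continuous m n d A B A_deriv B_deriv). }
  destruct (continuity_ab_min B 0 t t_ge0) as (xB & hxB & _).
  { intros x _. apply continuity_pt_filterlim, (system_continuous m n d A B A_deriv B_deriv). }
  set (K0 := Rabs K + Rabs (A xA) + Rabs (B xB)).
  exists (2 * K0 * exp (Rabs l * t)). intros r hr.
  assert (excess r <= 2 * K0).
  { destruct (hK r hr). generalize (hxA r hr) (hxB r hr). unfold excess, K0.
    generalize (Rabs_pos K) (Rabs_pos (A xA)) (Rabs_pos (B xB)).
    generalize (Rle_abs K) (Rabs_maj2 (A xA)) (Rabs_maj2 (B xB)).
    unfold Rmax; repeat destruct Rle_dec; lra. }
  rewrite Rmult_assoc, <- exp_plus.
  assert (1 <= exp (Rabs l * t + l * r)).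
  { rewrite <- exp_0. apply exp_le.
    assert (0 <= l * r + Rabs l * r).
    { rewrite <- Rmult_plus_distr_r. apply Rmult_le_pos; [generalize (Rabs_maj2 l) |]; lra. }
    assert (Rabs l * r <= Rabs l * t) by (apply Rmult_le_compat_l; [apply Rabs_pos | lra]).
    lra. }
  assert (0 <= K0) by (unfold K0; generalize (Rabs_pos K) (Rabs_pos (A xA)) (Rabs_pos (B xB)); lra).
  nra.
Qed.

Lemma excess_forward_step C : (forall u, 0 <= u <= t -> excess u <= C * exp (l * u)) ->
  forall r, 0 <= r <= t -> a r - A r <= th / 2 * C * exp (l * r).
Proof.
  intros hC r hr. assert (hC0 := excess_bound_ge0 C hC).
  destruct (a_duhamel r hr) as (I & hI & ha).
  assert (hA := system_duhamel_forward m n d A B A_deriv B_deriv r). rewrite A_0 in hA.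
  assert (hE := is_RInt_exp_kernel_forward m l (d * C) r ltac:(unfold l; lra)).
  assert (hle := is_RInt_le _ _ _ _ _ _ (proj1 hr) (is_RInt_minus _ _ _ _ _ _ hI hA) hE).
  unfold minus, plus, opp in hle; simpl in hle.
  replace (d * C * (exp (l * r) - exp (m * r)) / (l - m))
    with (th / 2 * C * exp (l * r) - th / 2 * C * exp (m * r)) in hle
    by (unfold th, l; field; lra).
  assert (0 <= th / 2 * C * exp (m * r)).
  { apply Rmult_le_pos; [apply Rmult_le_pos; lra | left; apply exp_pos]. }
  enough (I + - (A r - exp (m * r) * a 0) <= th / 2 * C * exp (l * r) - th / 2 * C * exp (m * r))
    by lra.
  apply hle. intros u hu.
  assert (h := Rle_trans _ _ _ (defect_le_excess u ltac:(lra)) (hC u ltac:(lra))).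
  assert (0 < exp (m * (r - u))) by apply exp_pos.
  assert (0 <= d * (C * exp (l * u) - (N u - (A u + B u)))) by (apply Rmult_le_pos; lra).
  nra.
Qed.

Lemma excess_backward_step C : (forall u, 0 <= u <= t -> excess u <= C * exp (l * u)) ->
  forall r, 0 <= r <= t -> b r - B r <= th / 2 * C * exp (l * r).
Proof.
  intros hC r hr. assert (hC0 := excess_bound_ge0 C hC).
  destruct (b_duhamel r hr) as (J & hJ & hb).
  assert (hB := system_duhamel_backward m n d A B A_deriv B_deriv t r). rewrite B_t in hB.
  assert (hE := is_RInt_exp_kernel_backward n l (d * C) r t ltac:(unfold l; lra)).
  assert (hle := is_RInt_le _ _ _ _ _ _ (proj2 hr) (is_RInt_minus _ _ _ _ _ _ hJ hB) hE).
  unfold minus, plus, opp in hle; simpl in hle.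
  set (tail := exp (- n * (t - r)) * exp (l * t)) in hle.
  replace (d * C * (exp (l * r) - tail) / (n - l))
    with (th / 2 * C * exp (l * r) - th / 2 * C * tail) in hle
    by (unfold th, l; field; lra).
  assert (0 <= th / 2 * C * tail).
  { apply Rmult_le_pos; [apply Rmult_le_pos; lra |].
    left. apply Rmult_lt_0_compat; apply exp_pos. }
  enough (J + - (B r - exp (- n * (t - r)) * b t) <= th / 2 * C * exp (l * r) - th / 2 * C * tail)
    by lra.
  apply hle. intros u hu.
  assert (h := Rle_trans _ _ _ (defect_le_excess u ltac:(lra)) (hC u ltac:(lra))).
  assert (0 < exp (- n * (u - r))) by apply exp_pos.
  assert (0 <= d * (C * exp (l * u) - (N u - (A u + B u)))) by (apply Rmult_le_pos; lra).
  nra.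
Qed.

Lemma excess_step C : (forall u, 0 <= u <= t -> excess u <= C * exp (l * u)) ->
  forall r, 0 <= r <= t -> excess r <= th * C * exp (l * r).
Proof.
  intros hC r hr.
  assert (hf := excess_forward_step C hC r hr).
  assert (hb := excess_backward_step C hC r hr).
  assert (0 <= th / 2 * C * exp (l * r)).
  { assert (h := hC r hr). generalize (excess_ge0 r). generalize (exp_pos (l * r)).
    generalize (proj1 th_bounds). nra. }
  unfold excess. unfold Rmax; repeat destruct Rle_dec; lra.
Qed.

Lemma excess_le_0 r : 0 <= r <= t -> excess r <= 0.
Proof.
  intros hr. destruct excess_bounded as [K hK].
  apply (le_0_of_le_geometric _ (K * exp (l * r)) th th_bounds).
  intros k. revert r hr. induction k as [| k IH]; intros r hr.
  - rewrite pow_O, Rmult_1_l. apply hK, hr.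
  - replace (th ^ S k * (K * exp (l * r))) with (th * (th ^ k * K) * exp (l * r))
      by (simpl; ring).
    apply (excess_step (th ^ k * K)); [| exact hr].
    intros u hu. rewrite Rmult_assoc. apply IH, hu.
Qed.

Lemma comparison_principle r : 0 <= r <= t -> a r <= A r /\ b r <= B r.
Proof.
  intros hr. assert (h := excess_le_0 r hr). unfold excess in h.
  generalize (Rmax_l (a r - A r) 0) (Rmax_l (b r - B r) 0)
    (Rmax_r (a r - A r) 0) (Rmax_r (b r - B r) 0).
  lra.
Qed.

End Comparison.

Lemma plus_plus_swap {G : AbelianGroup} (a b c d : G) :
  plus (plus a b) (plus c d) = plus (plus a c) (plus b d).
Proof.
  rewrite <- !plus_assoc. f_equal. rewrite !plus_assoc. f_equal. apply plus_comm.
Qed.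

Lemma minus_plus_plus {G : AbelianGroup} (a b c d : G) :
  minus (plus a b) (plus c d) = plus (minus a c) (minus b d).
Proof. unfold minus. rewrite opp_plus. apply plus_plus_swap. Qed.

Lemma minus_minus_minus {G : AbelianGroup} (a b c d : G) :
  minus (minus a b) (minus c d) = minus (minus a c) (minus b d).
Proof. unfold minus. rewrite (opp_plus c), (opp_plus b). apply plus_plus_swap. Qed.

Lemma minus_decompose {G : AbelianGroup} (p p' z z' : G) :
  minus z z' = plus (minus p p') (minus (minus z p) (minus z' p')).
Proof.
  rewrite (minus_minus_minus z p z' p'), plus_comm. unfold minus.
  rewrite <- plus_assoc, plus_opp_l, plus_zero_r. reflexivity.
Qed.

Lemma norm_minus_le {K : AbsRing} {V : NormedModule K} (a b : V) :
  norm (minus a b) <= norm a + norm b.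
Proof. unfold minus. rewrite <- (norm_opp b). apply norm_triangle. Qed.

Lemma additive_on_minus {V W : ModuleSpace R_Ring} (F : V -> W) (D : V -> Prop) :
  (forall x y, D x -> D y -> F (plus x y) = plus (F x) (F y)) ->
  (forall (k : R) x, D x -> F (scal k x) = scal k (F x)) ->
  (forall (k : R) x, D x -> D (scal k x)) ->
  forall x y, D x -> D y -> F (minus x y) = minus (F x) (F y).
Proof.
  intros hplus hscal hD x y hx hy. unfold minus.
  rewrite <- !scal_opp_one, hplus, hscal; auto.
Qed.

Section Fibres.

Context {M : TopSpace} {Z : NormedModule R_AbsRing} (P : M -> Z -> Z) (w : M).
Hypothesis P_lin : is_linear (P w).
Hypothesis P_idem : forall z, P w (P w z) = P w z.

Lemma inX_P v : inX P w (P w v).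
Proof. apply P_idem. Qed.

Lemma inY_Pc v : inY P w (Pc P w v).
Proof. unfold inY, Pc. rewrite linear_minus, P_idem by exact P_lin. exact (minus_eq_zero _). Qed.

Lemma inX_scal (k : R) x : inX P w x -> inX P w (scal k x).
Proof. unfold inX. intros hx. rewrite linear_scal, hx by exact P_lin. reflexivity. Qed.

Lemma inY_scal (k : R) y : inY P w y -> inY P w (scal k y).
Proof. unfold inY. intros hy. rewrite linear_scal, hy by exact P_lin. exact (scal_zero_r _). Qed.

Lemma inX_minus x y : inX P w x -> inX P w y -> inX P w (minus x y).
Proof. unfold inX. intros hx hy. rewrite linear_minus, hx, hy by exact P_lin. reflexivity. Qed.

Lemma inY_minus x y : inY P w x -> inY P w y -> inY P w (minus x y).
Proof.
  unfold inY. intros hx hy. rewrite linear_minus, hx, hy by exact P_lin. exact (minus_eq_zero _).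
Qed.

Lemma Pc_minus (u v : Z) : Pc P w (minus u v) = minus (Pc P w u) (Pc P w v).
Proof. unfold Pc. rewrite linear_minus by exact P_lin. exact (minus_minus_minus _ _ _ _). Qed.

End Fibres.

Definition clamp (t u : R) : R := Rmax 0 (Rmin t u).

Lemma clamp_in t u : 0 <= t -> 0 <= clamp t u <= t.
Proof. intros ht. unfold clamp, Rmax, Rmin. repeat destruct Rle_dec; lra. Qed.

Lemma clamp_id t u : 0 <= u <= t -> clamp t u = u.
Proof. intros h. unfold clamp, Rmax, Rmin. repeat destruct Rle_dec; lra. Qed.

Lemma clamp_lipschitz t x y : 0 <= t -> Rabs (clamp t y - clamp t x) <= Rabs (y - x).
Proof.
  intros ht. unfold clamp, Rmax, Rmin.
  repeat destruct Rle_dec; unfold Rabs; repeat destruct Rcase_abs; lra.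
Qed.

Definition continuous_on_segment {Z : NormedModule R_AbsRing} (s : R) (z : R -> Z) : Prop :=
  forall t0 e, 0 <= t0 -> t0 <= s -> 0 < e -> exists d, 0 < d /\
    forall t, 0 <= t -> t <= s -> Rabs (t - t0) < d -> norm (minus (z t) (z t0)) < e.

(* Clamping to [0, t] makes the distance continuous on all of R, as ex_RInt_continuous needs. *)
Definition clamped_dist {Z : NormedModule R_AbsRing} (t : R) (z z' : R -> Z) (u : R) : R :=
  norm (minus (z (clamp t u)) (z' (clamp t u))).

Lemma clamped_dist_id {Z : NormedModule R_AbsRing} t (z z' : R -> Z) u :
  0 <= u <= t -> clamped_dist t z z' u = norm (minus (z u) (z' u)).
Proof. intros hu. unfold clamped_dist. rewrite clamp_id by exact hu. reflexivity. Qed.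

Lemma clamped_dist_continuous {Z : NormedModule R_AbsRing} t (z z' : R -> Z) : 0 <= t ->
  continuous_on_segment t z -> continuous_on_segment t z' ->
  forall x, continuity_pt (clamped_dist t z z') x.
Proof.
  intros ht hz hz' x.
  unfold continuity_pt, continue_in, limit1_in, limit_in; simpl; unfold R_dist.
  intros e he.
  assert (hcx := clamp_in t x ht).
  destruct (hz (clamp t x) (e / 2) (proj1 hcx) (proj2 hcx) ltac:(lra)) as (d1 & hd1 & h1).
  destruct (hz' (clamp t x) (e / 2) (proj1 hcx) (proj2 hcx) ltac:(lra)) as (d2 & hd2 & h2).
  exists (Rmin d1 d2). split; [apply Rmin_pos; lra |].
  intros y [_ hy].
  assert (hcy := clamp_in t y ht).
  assert (hl := clamp_lipschitz t x y ht).
  generalize (Rmin_l d1 d2) (Rmin_r d1 d2). intros.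
  specialize (h1 (clamp t y) (proj1 hcy) (proj2 hcy) ltac:(lra)).
  specialize (h2 (clamp t y) (proj1 hcy) (proj2 hcy) ltac:(lra)).
  unfold clamped_dist.
  eapply Rle_lt_trans; [apply norm_triangle_inv |].
  rewrite minus_minus_minus. eapply Rle_lt_trans; [apply norm_minus_le | lra].
Qed.

Lemma ex_RInt_kernel_clamped_dist {Z : NormedModule R_AbsRing} t (z z' : R -> Z) (g : R -> R) c
  lo hi : 0 <= t -> continuous_on_segment t z -> continuous_on_segment t z' ->
  (forall x, ex_derive g x) ->
  ex_RInt (fun u => g u * (c * clamped_dist t z z' u)) lo hi.
Proof.
  intros ht hz hz' hg.
  apply (@ex_RInt_continuous R_CompleteNormedModule). intros x _.
  apply continuity_pt_filterlim, continuity_pt_mult.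
  { apply continuity_pt_filterlim, (@ex_derive_continuous R_AbsRing R_NormedModule), hg. }
  apply continuity_pt_mult; [apply continuity_pt_const; intros ? ?; reflexivity |].
  apply clamped_dist_continuous; assumption.
Qed.

Section SolutionPairs.

Context {Z : NormedModule R_AbsRing} {M : TopSpace} (phi : R -> M -> M) (P : M -> Z -> Z)
  (T1 S1 : R -> M -> Z -> Z) (f : M -> Z -> Z) (eps : M -> R) (C1 : R) (mu_s mu_u : M -> R).
Hypothesis hphi : semiflow M phi.
Hypothesis hLip : forall w, is_sup_Lip phi f w (eps w).
Hypothesis hUD : uniform_dichotomy phi P T1 S1 C1 mu_s mu_u.

Let phi_0 w : phi 0 w = w.
Proof. apply hphi. Qed.

Let phi_plus t s w : 0 <= t -> 0 <= s -> phi (t + s) w = phi t (phi s w).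
Proof. apply hphi. Qed.

Let f_Lip w t z z' : 0 <= t ->
  norm (minus (f (phi t w) z) (f (phi t w) z')) <= eps w * norm (minus z z').
Proof. apply hLip. Qed.

Let P_lin w : is_linear (P w).
Proof. apply hUD. Qed.

Let P_idem w z : P w (P w z) = P w z.
Proof. apply hUD. Qed.

Let P_bound w z : norm (P w z) <= C1 * norm z.
Proof. apply hUD. Qed.

Let Pc_bound w z : norm (Pc P w z) <= C1 * norm z.
Proof. apply hUD. Qed.

Let T1_minus t w x y : 0 <= t -> inX P w x -> inX P w y ->
  T1 t w (minus x y) = minus (T1 t w x) (T1 t w y).
Proof.
  intros ht. apply (additive_on_minus (T1 t w) (inX P w)); intros.
  - apply hUD; assumption.
  - apply hUD; assumption.
  - apply inX_scal; auto.
Qed.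

Let S1_minus t w x y : 0 <= t -> inY P (phi t w) x -> inY P (phi t w) y ->
  S1 t w (minus x y) = minus (S1 t w x) (S1 t w y).
Proof.
  intros ht. apply (additive_on_minus (S1 t w) (inY P (phi t w))); intros.
  - apply hUD; assumption.
  - apply hUD; assumption.
  - apply inY_scal; auto.
Qed.

Let T1_bound t r w x : 0 <= t -> 0 <= r -> inX P (phi r w) x ->
  norm (T1 t (phi r w) x) <= exp (mu_s w * t) * norm x.
Proof. apply hUD. Qed.

Let S1_bound t r w y : 0 <= t -> 0 <= r -> inY P (phi t (phi r w)) y ->
  norm (S1 t (phi r w) y) <= exp (- mu_u w * t) * norm y.
Proof. apply hUD. Qed.

Lemma norm_eq_0_of_C1_neg (w : M) : C1 < 0 -> forall z : Z, norm z = 0.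
Proof.
  intros hC z. generalize (P_bound w z) (norm_ge_0 (P w z)) (norm_ge_0 z). nra.
Qed.

Lemma C1_eps_ge0 w : 0 <= C1 * eps w.
Proof.
  destruct (Rle_lt_dec 0 C1) as [hC | hC].
  - apply Rmult_le_pos; [exact hC | apply hLip].
  - enough (he : eps w = 0) by (rewrite he; lra).
    apply Rle_antisym; [| apply hLip].
    apply hLip; [lra |]. intros t z z' _.
    rewrite (norm_eq_0_of_C1_neg w hC (minus _ _)). lra.
Qed.

Definition x_dist (w : M) (z z' : R -> Z) (r : R) : R :=
  norm (minus (P (phi r w) (z r)) (P (phi r w) (z' r))).

Definition y_dist (w : M) (z z' : R -> Z) (r : R) : R :=
  norm (minus (Pc P (phi r w) (z r)) (Pc P (phi r w) (z' r))).

Lemma T1_diff_le w r t x x' : 0 <= t -> 0 <= r ->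
  norm (minus (T1 t (phi r w) (P (phi r w) x)) (T1 t (phi r w) (P (phi r w) x')))
  <= exp (mu_s w * t) * norm (minus (P (phi r w) x) (P (phi r w) x')).
Proof.
  intros ht hr. rewrite <- T1_minus by (auto; apply inX_P; auto).
  apply T1_bound; auto. apply inX_minus; auto; apply inX_P; auto.
Qed.

Lemma S1_diff_le w r t y y' : 0 <= t -> 0 <= r ->
  norm (minus (S1 t (phi r w) (Pc P (phi t (phi r w)) y))
              (S1 t (phi r w) (Pc P (phi t (phi r w)) y')))
  <= exp (- mu_u w * t) * norm (minus (Pc P (phi t (phi r w)) y) (Pc P (phi t (phi r w)) y')).
Proof.
  intros ht hr. rewrite <- S1_minus by (auto; apply inY_Pc; auto).
  apply S1_bound; auto. apply inY_minus; auto; apply inY_Pc; auto.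
Qed.

Section NonnegativeC1.

Hypothesis C1_ge0 : 0 <= C1.

Lemma P_f_diff_le w r z z' : 0 <= r ->
  norm (minus (P (phi r w) (f (phi r w) z)) (P (phi r w) (f (phi r w) z')))
  <= C1 * eps w * norm (minus z z').
Proof.
  intros hr. rewrite <- linear_minus by apply P_lin.
  eapply Rle_trans; [apply P_bound |].
  rewrite Rmult_assoc. apply Rmult_le_compat_l; [exact C1_ge0 | apply f_Lip, hr].
Qed.

Lemma Pc_f_diff_le w r z z' : 0 <= r ->
  norm (minus (Pc P (phi r w) (f (phi r w) z)) (Pc P (phi r w) (f (phi r w) z')))
  <= C1 * eps w * norm (minus z z').
Proof.
  intros hr. rewrite <- Pc_minus by apply P_lin.
  eapply Rle_trans; [apply Pc_bound |].
  rewrite Rmult_assoc. apply Rmult_le_compat_l; [exact C1_ge0 | apply f_Lip, hr].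
Qed.

Lemma x_dist_duhamel w s t z z' : 0 <= s ->
  is_solution phi P T1 S1 f t (phi s w) z -> is_solution phi P T1 S1 f t (phi s w) z' ->
  forall r, 0 <= r <= t -> exists I,
    is_RInt (fun u => exp (mu_s w * (r - u)) * (C1 * eps w * clamped_dist t z z' u)) 0 r I /\
    x_dist (phi s w) z z' r <= exp (mu_s w * r) * x_dist (phi s w) z z' 0 + I.
Proof.
  intros hs [hzc hz] [hzc' hz'] r hr.
  destruct (hz r (proj1 hr) (proj2 hr)) as [(I & hI & hIe) _].
  destruct (hz' r (proj1 hr) (proj2 hr)) as [(I' & hI' & hIe') _].
  set (g := fun u => exp (mu_s w * (r - u)) * (C1 * eps w * clamped_dist t z z' u)).
  assert (hg : ex_RInt g 0 r).
  { apply ex_RInt_kernel_clamped_dist; [lra | exact hzc | exact hzc' |].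
    intros x. auto_derive. easy. }
  exists (RInt g 0 r). split; [exact (RInt_correct _ _ _ hg) |].
  unfold x_dist.
  rewrite hIe, hIe', (@minus_plus_plus (NormedModule.AbelianGroup R_AbsRing Z)), phi_0.
  eapply Rle_trans; [apply norm_triangle | apply Rplus_le_compat].
  - apply (T1_diff_le w s r); lra.
  - refine (norm_RInt_le _ g 0 r _ _ (proj1 hr) _ (is_RInt_minus _ _ _ _ _ _ hI hI')
      (RInt_correct _ _ _ hg)).
    intros u hu. unfold g. rewrite <- phi_plus by lra.
    eapply Rle_trans; [apply T1_diff_le; lra |].
    apply Rmult_le_compat_l; [left; apply exp_pos |].
    rewrite clamped_dist_id by lra. apply P_f_diff_le. lra.
Qed.

Lemma y_dist_duhamel w s t z z' : 0 <= s ->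
  is_solution phi P T1 S1 f t (phi s w) z -> is_solution phi P T1 S1 f t (phi s w) z' ->
  forall r, 0 <= r <= t -> exists J,
    is_RInt (fun u => exp (- mu_u w * (u - r)) * (C1 * eps w * clamped_dist t z z' u)) r t J /\
    y_dist (phi s w) z z' r <= exp (- mu_u w * (t - r)) * y_dist (phi s w) z z' t + J.
Proof.
  intros hs [hzc hz] [hzc' hz'] r hr.
  destruct (hz r (proj1 hr) (proj2 hr)) as [_ (J & hJ & hJe)].
  destruct (hz' r (proj1 hr) (proj2 hr)) as [_ (J' & hJ' & hJe')].
  set (g := fun u => exp (- mu_u w * (u - r)) * (C1 * eps w * clamped_dist t z z' u)).
  assert (hg : ex_RInt g r t).
  { apply ex_RInt_kernel_clamped_dist; [lra | exact hzc | exact hzc' |].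
    intros x. auto_derive. easy. }
  assert (hphi_r : phi r (phi s w) = phi (r + s) w) by (symmetry; apply phi_plus; lra).
  assert (hphi_u : forall u, r <= u -> phi u (phi s w) = phi (u - r) (phi (r + s) w)).
  { intros u hu. rewrite <- !phi_plus by lra. f_equal. ring. }
  exists (RInt g r t). split; [exact (RInt_correct _ _ _ hg) |].
  unfold y_dist. rewrite hJe, hJe', (@minus_minus_minus (NormedModule.AbelianGroup R_AbsRing Z)).
  eapply Rle_trans; [apply norm_minus_le | apply Rplus_le_compat].
  - rewrite hphi_r, (hphi_u t) by lra. apply (S1_diff_le w (r + s) (t - r)); lra.
  - refine (norm_RInt_le _ g r t _ _ (proj2 hr) _ (is_RInt_minus _ _ _ _ _ _ hJ hJ')
      (RInt_correct _ _ _ hg)).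
    intros u hu. unfold g. rewrite hphi_r, (hphi_u u) by lra.
    eapply Rle_trans; [apply S1_diff_le; lra |].
    apply Rmult_le_compat_l; [left; apply exp_pos |].
    rewrite <- (hphi_u u), <- phi_plus, clamped_dist_id by lra. apply Pc_f_diff_le. lra.
Qed.

Lemma fibre_dists_bounded w t z z' : 0 <= t ->
  continuous_on_segment t z -> continuous_on_segment t z' ->
  exists K, forall r, 0 <= r <= t -> x_dist w z z' r <= K /\ y_dist w z z' r <= K.
Proof.
  intros ht hz hz'.
  destruct (continuity_ab_maj (clamped_dist t z z') 0 t ht) as (xN & hxN & _).
  { intros x _. apply clamped_dist_continuous; assumption. }
  exists (C1 * clamped_dist t z z' xN). intros r hr.
  assert (hN : C1 * norm (minus (z r) (z' r)) <= C1 * clamped_dist t z z' xN).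
  { rewrite <- (clamped_dist_id t z z' r hr).
    apply Rmult_le_compat_l; [exact C1_ge0 | apply hxN, hr]. }
  unfold x_dist, y_dist. rewrite <- linear_minus, <- Pc_minus by apply P_lin.
  split; eapply Rle_trans; [apply P_bound | | apply Pc_bound |]; exact hN.
Qed.

Lemma clamped_dist_le_fibre_dists w t z z' r : 0 <= r <= t ->
  clamped_dist t z z' r <= x_dist w z z' r + y_dist w z z' r.
Proof.
  intros hr. rewrite clamped_dist_id by exact hr. unfold x_dist, y_dist, Pc.
  rewrite (@minus_decompose (NormedModule.AbelianGroup R_AbsRing Z)
    (P (phi r w) (z r)) (P (phi r w) (z' r))).
  apply norm_triangle.
Qed.

Lemma solution_pair_dominated t s w x1 y1 x2 y2 x1' y1' x2' y2' : 0 <= t -> 0 <= s ->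
  4 * (C1 * eps w) < mu_u w - mu_s w ->
  H_graph phi P T1 S1 f t (phi s w) x1 y1 x2 y2 ->
  H_graph phi P T1 S1 f t (phi s w) x1' y1' x2' y2' ->
  exists A B : R -> R,
    (forall x, is_derive A x ((mu_s w + C1 * eps w) * A x + C1 * eps w * B x)) /\
    (forall x, is_derive B x ((mu_u w - C1 * eps w) * B x - C1 * eps w * A x)) /\
    (forall r, 0 <= r <= t -> 0 <= A r /\ 0 <= B r) /\
    A 0 = norm (minus x1 x1') /\ B t = norm (minus y2 y2') /\
    norm (minus y1 y1') <= B 0 /\ norm (minus x2 x2') <= A t.
Proof.
  intros ht hs hgap (_ & _ & z & hz & e0 & et & e1 & e2) (_ & _ & z' & hz' & e0' & et' & e1' & e2').
  set (a := x_dist (phi s w) z z'). set (b := y_dist (phi s w) z z').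
  destruct (system_bvp_exists (mu_s w) (mu_u w) (C1 * eps w) t (a 0) (b t) (C1_eps_ge0 w) hgap ht)
    as (A & B & hA & hB & hA0 & hBt).
  assert (hcmp := comparison_principle (mu_s w) (mu_u w) (C1 * eps w) t a b
    (clamped_dist t z z') A B
    (C1_eps_ge0 w) hgap ht hA hB hA0 hBt (clamped_dist_le_fibre_dists (phi s w) t z z')
    (x_dist_duhamel w s t z z' hs hz hz') (y_dist_duhamel w s t z z' hs hz hz')
    (fibre_dists_bounded (phi s w) t z z' ht (proj1 hz) (proj1 hz'))).
  exists A, B. split; [exact hA |]. split; [exact hB |]. split; [| split; [| split; [| split]]].
  - intros r hr. destruct (hcmp r hr).
    generalize (norm_ge_0 (minus (P (phi r (phi s w)) (z r)) (P (phi r (phi s w)) (z' r))))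
      (norm_ge_0 (minus (Pc P (phi r (phi s w)) (z r)) (Pc P (phi r (phi s w)) (z' r)))).
    unfold a, b, x_dist, y_dist in *. lra.
  - rewrite hA0. unfold a, x_dist. rewrite phi_0, e0, e0'. reflexivity.
  - rewrite hBt. unfold b, y_dist. rewrite et, et'. reflexivity.
  - rewrite e1, e1'. replace (phi s w) with (phi 0 (phi s w)) at 1 2 by apply phi_0.
    apply (hcmp 0). lra.
  - rewrite e2, e2'. apply (hcmp t). lra.
Qed.

End NonnegativeC1.

Let eps' w := 2 * C1 * eps w.
Let sigma w := mu_u w - mu_s w - eps' w.

Lemma AB_cond_of_cone_slope t s w al be ka kb : 0 <= t -> 0 <= s ->
  0 < mu_u w - mu_s w - 2 * eps' w ->
  eps' w / sigma w <= al <= 1 -> eps' w / sigma w <= be <= 1 ->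
  cone_slope (eps' w / sigma w) (sigma w) al t <= ka * al ->
  cone_slope (eps' w / sigma w) (sigma w) be t <= kb * be ->
  AB_cond (H_graph phi P T1 S1 f t (phi s w))
    al (ka * al) (Rpower (exp (- mu_u w + eps' w)) t)
    be (kb * be) (Rpower (exp (mu_s w + eps' w)) t).
Proof.
  intros ht hs hgap hal hbe hka hkb. rewrite !Rpower_exp.
  intros x1 y1 x2 y2 x1' y1' x2' y2' H1 H2.
  destruct (Rle_lt_dec 0 C1) as [hC | hC].
  2: { rewrite !(norm_eq_0_of_C1_neg w hC). repeat split; intros; lra. }
  unfold sigma, eps' in *.
  replace (2 * C1 * eps w) with (2 * (C1 * eps w)) in * by ring.
  assert (hd := C1_eps_ge0 w).
  destruct (solution_pair_dominated hC t s w x1 y1 x2 y2 x1' y1' x2' y2' ht hs ltac:(lra) H1 H2)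
    as (A & B & hA & hB & hAB & hA0 & hBt & hy1 & hx2).
  replace (t * (- mu_u w + 2 * (C1 * eps w))) with (- (mu_u w - 2 * (C1 * eps w)) * t) by ring.
  replace (t * (mu_s w + 2 * (C1 * eps w))) with ((mu_s w + 2 * (C1 * eps w)) * t) by ring.
  apply (system_cone_conditions (mu_s w) (mu_u w) (C1 * eps w) t A B hA hB hd ltac:(lra) ht);
    try (intros r hr; apply hAB, hr); assumption.
Qed.

Let lam_u w := exp (- mu_u w + eps' w).
Let lam_s w := exp (mu_s w + eps' w).

Section Gap.

Hypothesis gap : forall w, 0 < mu_u w - mu_s w - 2 * eps' w.

Let eps'_ge0 w : 0 <= eps' w.
Proof. unfold eps'. generalize (C1_eps_ge0 w). lra. Qed.

Let sigma_pos w : 0 < sigma w.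
Proof. unfold sigma. generalize (gap w) (eps'_ge0 w). lra. Qed.

Let vertex_ge0 w : 0 <= eps' w / sigma w.
Proof. apply Rle_mult_inv_pos; [apply eps'_ge0 | apply sigma_pos]. Qed.

Lemma AB_cond_cone t s w al be : 0 <= t -> 0 <= s ->
  eps' w / sigma w <= al <= 1 -> eps' w / sigma w <= be <= 1 ->
  AB_cond (H_graph phi P T1 S1 f t (phi s w))
    al al (Rpower (lam_u w) t) be be (Rpower (lam_s w) t).
Proof.
  intros ht hs hal hbe.
  assert (h := AB_cond_of_cone_slope t s w al be 1 1 ht hs (gap w) hal hbe).
  rewrite !Rmult_1_l in h. apply h; apply cone_slope_between; generalize (sigma_pos w); lra.
Qed.

Lemma cone_invariance (alpha beta : M -> R) :
  (forall w, eps' w / sigma w <= alpha w /\ alpha w < 1 /\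
             eps' w / sigma w <= beta w /\ beta w < 1) ->
  forall t s w, 0 <= t -> 0 <= s ->
    AB_cond (H_graph phi P T1 S1 f t (phi s w)) (alpha w) (alpha w) (Rpower (lam_u w) t)
                                           (beta w) (beta w) (Rpower (lam_s w) t).
Proof. intros hab t s w ht hs. destruct (hab w). apply AB_cond_cone; auto; lra. Qed.

Lemma cone_contraction (alpha beta : M -> R) :
  (forall w, eps' w / sigma w < alpha w /\ alpha w < 1 /\
             eps' w / sigma w < beta w /\ beta w < 1) ->
  forall eps1, 0 < eps1 ->
  forall k_alpha k_beta : M -> R,
  (forall w,
     ((sigma w - eps' w / alpha w) * exp (- sigma w * eps1) + eps' w / alpha w)
       / sigma w <= k_alpha w /\ k_alpha w < 1 /\
     ((sigma w - eps' w / beta w) * exp (- sigma w * eps1) + eps' w / beta w)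
       / sigma w <= k_beta w /\ k_beta w < 1) ->
  forall t s w, eps1 <= t -> 0 <= s ->
    AB_cond (H_graph phi P T1 S1 f t (phi s w))
      (alpha w) (k_alpha w * alpha w) (Rpower (lam_u w) t)
      (beta w) (k_beta w * beta w) (Rpower (lam_s w) t).
Proof.
  intros hab eps1 he1 ka kb hk t s w ht hs.
  destruct (hab w) as (ha1 & ha2 & hb1 & hb2). destruct (hk w) as (hka & _ & hkb & _).
  apply AB_cond_of_cone_slope; try lra; [apply gap | |];
    apply cone_slope_le_paper_bound with eps1; auto.
Qed.

Lemma AB_cond_uniform_cone C a Dl eps1 : C < a < 1 -> 0 < Dl -> 0 < eps1 ->
  (forall w, eps' w / sigma w <= C) -> (forall w, Dl <= sigma w) ->
  exists ka, ka < 1 /\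
    (forall t s w, 0 <= t -> 0 <= s ->
       AB_cond (H_graph phi P T1 S1 f t (phi s w)) a a (Rpower (lam_u w) t)
                                                 a a (Rpower (lam_s w) t)) /\
    (forall t s w, eps1 <= t -> 0 <= s ->
       AB_cond (H_graph phi P T1 S1 f t (phi s w)) a (ka * a) (Rpower (lam_u w) t)
                                                 a (ka * a) (Rpower (lam_s w) t)).
Proof.
  intros ha hDl he1 hC hsg.
  destruct (Rlt_le_dec 0 a) as [ha0 | ha0].
  (* a <= 0 forces M to be empty, since 0 <= eps' / sigma <= C < a. *)
  2: { exists 0. split; [lra |].
       split; intros t s w; generalize (hC w) (vertex_ge0 w); lra. }
  set (r := exp (- Dl * eps1)).
  assert (hr : r < 1) by (unfold r; rewrite <- exp_0; apply exp_increasing; nra).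
  exists (1 - (a - C) * (1 - r) / a). split; [| split].
  - assert (0 < (a - C) * (1 - r) / a)
      by (apply Rdiv_lt_0_compat; [apply Rmult_lt_0_compat |]; lra).
    lra.
  - intros t s w ht hs. generalize (hC w). intros. apply AB_cond_cone; auto; lra.
  - intros t s w ht hs. generalize (hC w). intros.
    assert (hslope : cone_slope (eps' w / sigma w) (sigma w) a t <=
                     (1 - (a - C) * (1 - r) / a) * a).
    { replace ((1 - (a - C) * (1 - r) / a) * a) with (a - (a - C) * (1 - r)) by (field; lra).
      generalize (hsg w). intros. apply cone_slope_le_uniform; lra. }
    apply AB_cond_of_cone_slope; auto; lra.
Qed.

Section UniformGap.

Variables (c delta : R).
Hypothesis c_gt1 : 1 < c.
Hypothesis delta_pos : 0 < delta.
Hypothesis uniform_gap : forall w, delta <= mu_u w - mu_s w - (1 + c) * eps' w.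

Let sigma_ge w : delta + c * eps' w <= sigma w.
Proof. unfold sigma. generalize (uniform_gap w). lra. Qed.

Let vertex_le w k E : 0 < k -> k * eps' w <= E * sigma w -> eps' w / sigma w <= E / k.
Proof.
  intros hk h. generalize (sigma_pos w). intros.
  apply (Rmult_le_reg_r (sigma w * k)); [nra |].
  replace (eps' w / sigma w * (sigma w * k)) with (k * eps' w) by (field; lra).
  replace (E / k * (sigma w * k)) with (E * sigma w) by (field; lra).
  exact h.
Qed.

Lemma lam_product_lt_1 : exists q, q < 1 /\ forall w, lam_s w * lam_u w <= q.
Proof.
  exists (exp (- delta)). split.
  - rewrite <- exp_0. apply exp_increasing. lra.
  - intros w. unfold lam_s, lam_u. rewrite <- exp_plus. apply exp_le.
    generalize (uniform_gap w) (eps'_ge0 w). nra.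
Qed.

Lemma uniform_cone_constants : forall eps1, 0 < eps1 ->
  exists a0 b0 ka kb, a0 < 1 /\ b0 < 1 /\ ka < 1 /\ kb < 1 /\
    (forall w, eps' w / sigma w < a0 /\ eps' w / sigma w < b0) /\
    (forall t s w, 0 <= t -> 0 <= s ->
       AB_cond (H_graph phi P T1 S1 f t (phi s w)) a0 a0 (Rpower (lam_u w) t)
                                                 b0 b0 (Rpower (lam_s w) t)) /\
    (forall t s w, eps1 <= t -> 0 <= s ->
       AB_cond (H_graph phi P T1 S1 f t (phi s w)) a0 (ka * a0) (Rpower (lam_u w) t)
                                                 b0 (kb * b0) (Rpower (lam_s w) t)).
Proof.
  intros eps1 he1.
  assert (hc : 0 < / c < 1).
  { split; [apply Rinv_0_lt_compat; lra |]. rewrite <- Rinv_1. apply Rinv_lt_contravar; lra. }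
  assert (hvertex : forall w, eps' w / sigma w <= / c).
  { intros w. rewrite <- (Rmult_1_l (/ c)). apply vertex_le; [lra |].
    generalize (sigma_ge w) (eps'_ge0 w). nra. }
  set (a0 := (1 + / c) / 2).
  destruct (AB_cond_uniform_cone (/ c) a0 delta eps1) as (ka & hka & hAB & hABk);
    [unfold a0; lra | lra | lra | exact hvertex |
     intros w; generalize (sigma_ge w) (eps'_ge0 w); nra |].
  exists a0, a0, ka, ka.
  split; [unfold a0; lra |]. split; [unfold a0; lra |]. split; [exact hka |]. split; [exact hka |].
  split; [| split; [exact hAB | exact hABk]].
  intros w. generalize (hvertex w). unfold a0. lra.
Qed.

Lemma small_cone_constants : forall E, (forall w, eps' w <= E) ->
  forall a, E / delta < a -> a < 1 -> forall eps1, 0 < eps1 ->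
  exists ka kb, ka < 1 /\ kb < 1 /\
    (forall t s w, 0 <= t -> 0 <= s ->
       AB_cond (H_graph phi P T1 S1 f t (phi s w)) a a (Rpower (lam_u w) t)
                                                 a a (Rpower (lam_s w) t)) /\
    (forall t s w, eps1 <= t -> 0 <= s ->
       AB_cond (H_graph phi P T1 S1 f t (phi s w)) a (ka * a) (Rpower (lam_u w) t)
                                                 a (kb * a) (Rpower (lam_s w) t)).
Proof.
  intros E hE a ha ha1 eps1 he1.
  destruct (AB_cond_uniform_cone (E / delta) a delta eps1) as (ka & hka & hAB & hABk);
    [lra | lra | lra | | intros w; generalize (sigma_ge w) (eps'_ge0 w); nra |].
  - intros w. apply vertex_le; [lra |].
    generalize (sigma_ge w) (eps'_ge0 w) (hE w). intros.
    assert (0 <= c * eps' w) by (apply Rmult_le_pos; lra).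
    assert (0 <= E * (sigma w - delta)) by (apply Rmult_le_pos; lra).
    assert (0 <= delta * (E - eps' w)) by (apply Rmult_le_pos; lra).
    lra.
  - exists ka, ka. auto.
Qed.

End UniformGap.

End Gap.

End SolutionPairs.

Theorem theorem3p12
  (X Y : CompleteNormedModule R_AbsRing)
  (T : R -> X -> X) (S : R -> Y -> Y)
  (M : TopSpace) (phi : R -> M -> M)
  (L : M -> Zsp X Y -> Zsp X Y) (f : M -> Zsp X Y -> Zsp X Y) (eps : M -> R)
  (P : M -> Zsp X Y -> Zsp X Y) (T1 S1 : R -> M -> Zsp X Y -> Zsp X Y)
  (C1 : R) (mu_s mu_u : M -> R)
  (hT : C0_semigroup T)
  (hS : C0_semigroup (fun t => S (- t)))
  (hM : Hausdorff M) (hphi : semiflow M phi)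
  (hD1 : D1 phi L) (hD2 : D2 phi f eps)
  (hUD : uniform_dichotomy phi P T1 S1 C1 mu_s mu_u)
  (hUDc : UD_compat phi T S L P T1 S1)
  (hgap : forall w, mu_u w - mu_s w - 2 * (2 * C1 * eps w) > 0) :
  let eps' := fun w => 2 * C1 * eps w in
  let sigma := fun w => mu_u w - mu_s w - eps' w in
  let lam_u := fun w => exp (- mu_u w + eps' w) in
  let lam_s := fun w => exp (mu_s w + eps' w) in
  let H := H_graph phi P T1 S1 f in
  (* main assertion *)
  (forall alpha beta : M -> R,
     (forall w, eps' w / sigma w <= alpha w /\ alpha w < 1 /\
                eps' w / sigma w <= beta w /\ beta w < 1) ->
     forall t s w, 0 <= t -> 0 <= s ->
       AB_cond (H t (phi s w)) (alpha w) (alpha w) (Rpower (lam_u w) t)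
                               (beta w) (beta w) (Rpower (lam_s w) t)) /\
  (* "moreover" *)
  (forall alpha beta : M -> R,
     (forall w, eps' w / sigma w < alpha w /\ alpha w < 1 /\
                eps' w / sigma w < beta w /\ beta w < 1) ->
     forall eps1, 0 < eps1 ->
     forall k_alpha k_beta : M -> R,
     (forall w,
        ((sigma w - eps' w / alpha w) * exp (- sigma w * eps1) + eps' w / alpha w)
          / sigma w <= k_alpha w /\ k_alpha w < 1 /\
        ((sigma w - eps' w / beta w) * exp (- sigma w * eps1) + eps' w / beta w)
          / sigma w <= k_beta w /\ k_beta w < 1) ->
     forall t s w, eps1 <= t -> 0 <= s ->
       AB_cond (H t (phi s w)) (alpha w) (k_alpha w * alpha w) (Rpower (lam_u w) t)
                               (beta w) (k_beta w * beta w) (Rpower (lam_s w) t)) /\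
  (* "in particular" *)
  (forall c delta, 1 < c -> 0 < delta ->
     (forall w, delta <= mu_u w - mu_s w - (1 + c) * eps' w) ->
     (exists q, q < 1 /\ forall w, lam_s w * lam_u w <= q) /\
     (forall eps1, 0 < eps1 ->
        exists a0 b0 ka kb, a0 < 1 /\ b0 < 1 /\ ka < 1 /\ kb < 1 /\
          (forall w, eps' w / sigma w < a0 /\ eps' w / sigma w < b0) /\
          (forall t s w, 0 <= t -> 0 <= s ->
             AB_cond (H t (phi s w)) a0 a0 (Rpower (lam_u w) t)
                                     b0 b0 (Rpower (lam_s w) t)) /\
          (forall t s w, eps1 <= t -> 0 <= s ->
             AB_cond (H t (phi s w)) a0 (ka * a0) (Rpower (lam_u w) t)
                                     b0 (kb * b0) (Rpower (lam_s w) t))) /\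
     (forall E, (forall w, eps' w <= E) ->
        forall a, E / delta < a -> a < 1 ->
        forall eps1, 0 < eps1 ->
        exists ka kb, ka < 1 /\ kb < 1 /\
          (forall t s w, 0 <= t -> 0 <= s ->
             AB_cond (H t (phi s w)) a a (Rpower (lam_u w) t)
                                     a a (Rpower (lam_s w) t)) /\
          (forall t s w, eps1 <= t -> 0 <= s ->
             AB_cond (H t (phi s w)) a (ka * a) (Rpower (lam_u w) t)
                                     a (kb * a) (Rpower (lam_s w) t)))).
Proof.
  intros eps' sigma lam_u lam_s H.
  assert (hLip : forall w, is_sup_Lip phi f w (eps w)) by apply hD2.
  split; [| split].
  - exact (cone_invariance phi P T1 S1 f eps C1 mu_s mu_u hphi hLip hUD hgap).
  - exact (cone_contraction phi P T1 S1 f eps C1 mu_s mu_u hphi hLip hUD hgap).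
  - intros c delta hc hdelta hud. split; [| split].
    + exact (lam_product_lt_1 phi P T1 S1 f eps C1 mu_s mu_u hLip hUD c delta hc hdelta hud).
    + exact (uniform_cone_constants phi P T1 S1 f eps C1 mu_s mu_u hphi hLip hUD hgap
        c delta hc hdelta hud).
    + exact (small_cone_constants phi P T1 S1 f eps C1 mu_s mu_u hphi hLip hUD hgap
        c delta hc hdelta hud).
Qed.
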